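(* Let $n\ge 3$ and let $\Delta=\Delta_{J(K_n)}$ be the simplicial complex on the vertex set $\{[ij]\mid 1\le i<j\le n\}$ (the edges of the complete graph $K_n$) whose Stanley–Reisner ideal is \[J(K_n)=\langle x_{ij}x_{kl},\ x_{ij}x_{ik}x_{jk}\mid i,j,k,l\text{ distinct}\rangle\subseteq \Bbbk[x_{ij}\mid 1\le i<j\le n].\] Then $\Delta$ consists of $n$ simplices of dimension $n-2$ (its facets), each meeting the others in $n-1$ vertices, and its face polynomial is \[f(\Delta,x)=x^{n-1}+n\Big((n-1)x^{n-2}+\binom{n-1}2x^{n-3}+\binom{n-1}3x^{n-4}+\cdots+(n-1)x+1\Big)-\binom n2x^{n-2}.\]
   Context: The Stanley–Reisner ideal of a simplicial complex $\Delta$ is generated by the monomials $\prod_{v\in\sigma}x_v$ for non-faces $\sigma$ of $\Delta$. For a simplicial complex $\Delta$ of dimension $\delta-1$ with $f_{i}$ faces of dimension $i$ ($f_{-1}=1$ for the empty face), the face polynomial is $f(\Delta,x)=\sum_{i=0}^{\delta}f_{i-1}x^{\delta-i}$. Here $x_{ji}:=x_{ij}$. *)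

From HB Require Import structures.
From mathcomp Require Import all_boot all_order all_algebra.
Set Implicit Arguments. Unset Strict Implicit. Unset Printing Implicit Defensive.
Import GRing.Theory.
Local Open Scope ring_scope.

(* Vertices: the edges [ij] of the complete graph K_n, i.e. 2-subsets of 'I_n. *)
Definition Kedge (n : nat) := {e : {set 'I_n} | #|e| == 2%N}.

(* The simplicial complex on V whose Stanley-Reisner ideal is generated by the
   squarefree monomials prod_{v in g} x_v, g in gens: a set sigma is a face
   iff the monomial x^sigma is not in the ideal, i.e. no generator divides it. *)
Definition SRcomplex (V : finType) (gens : {set {set V}}) : {set {set V}} :=
  [set s : {set V} | [forall g in gens, ~~ (g \subset s)]].

(* Supports of the generators of J(K_n):
   x_ij x_kl (i,j,k,l distinct) and x_ij x_ik x_jk (i,j,k distinct). *)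
Definition JKn_gens (n : nat) : {set {set Kedge n}} :=
  [set g : {set Kedge n} |
     [exists i : 'I_n, exists j : 'I_n, exists k : 'I_n, exists l : 'I_n,
        [&& uniq [:: i; j; k; l] &
            (g == [set e : Kedge n | (val e == [set i; j]) || (val e == [set k; l])])]]
  || [exists i : 'I_n, exists j : 'I_n, exists k : 'I_n,
        [&& uniq [:: i; j; k] &
            (g == [set e : Kedge n | [|| val e == [set i; j], val e == [set i; k]
                                       | val e == [set j; k]]])]]].

Definition DeltaJKn (n : nat) : {set {set Kedge n}} := SRcomplex (JKn_gens n).

Definition facets (V : finType) (D : {set {set V}}) : {set {set V}} :=
  [set F in D | [forall G in D, (F \subset G) ==> (G == F)]].

(* delta = dim + 1 = maximal size of a face *)
Definition cx_delta (V : finType) (D : {set {set V}}) : nat :=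
  \max_(s in D) #|s|.

(* f_{i-1} = number of faces with i vertices *)
Definition fnum (V : finType) (D : {set {set V}}) (i : nat) : nat :=
  #|[set s in D | #|s| == i]|.

Definition face_poly (V : finType) (D : {set {set V}}) : {poly int} :=
  \sum_(i < (cx_delta D).+1) (fnum D i)%:R *: 'X^(cx_delta D - i).

(* A set of edges of K_n contains no generator of J(K_n) iff any two of its
   edges meet and no three of them form a triangle, i.e. iff all its edges
   share a vertex.  So the faces of Delta are the subsets of the n stars
   star i = {[ij] | j <> i}, which are the facets and have n - 1 vertices;
   every edge [ij] lies in both star i and star j.  A face with k >= 2 edges
   determines its centre, so there are n * C(n-1, k) of them, whereas every
   edge is a face: the n * (n - 1) = 2 * C(n, 2) edges counted by the star
   formula for k = 1 are thus corrected by - C(n, 2) x^(n-2). *)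

From HB Require Import structures.
From mathcomp Require Import all_boot all_order all_algebra.
Set Implicit Arguments. Unset Strict Implicit. Unset Printing Implicit Defensive.
Import GRing.Theory.

Section DeltaJKn.
Variable n : nat.
Implicit Types (e f g : Kedge n) (s : {set Kedge n}) (i j : 'I_n).

Definition star i : {set Kedge n} := [set e : Kedge n | i \in val e].

Lemma card_Kedge_val e : #|val e| = 2.
Proof. by case: e => E /= /eqP. Qed.

Lemma Kedge_other e (x : 'I_n) : x \in val e -> exists2 y, y != x & val e = [set x; y].
Proof.
move=> xe; have /eqP/cards2P [u [v [uv E]]] := card_Kedge_val e.
move: xe; rewrite E !inE => /orP [/eqP->|/eqP->].
  by exists v; rewrite // eq_sym.
by exists u; rewrite // setUC.
Qed.

Fact kedge_subproof i j : i != j -> #|[set i; j]| == 2.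
Proof. by rewrite cards2 => ->. Qed.

Definition kedge i j (ij : i != j) : Kedge n := exist _ [set i; j] (kedge_subproof ij).

Lemma kedge_in_star (x : 'I_n) i j (ij : i != j) : (kedge ij \in star x) = (x == i) || (x == j).
Proof. by rewrite !inE. Qed.

Lemma JKn_gen_not_sub_star i (G : {set Kedge n}) : G \in JKn_gens n -> ~~ (G \subset star i).
Proof.
rewrite inE => /orP [].
  case/existsP => a /existsP [b /existsP [c /existsP [d /andP [u /eqP ->]]]].
  move: u; rewrite /= !inE !negb_or => /andP [/and3P [ab ac ad] /andP [/andP [bc bd] /andP [cd _]]].
  apply/negP => /subsetP /[dup] /(_ (kedge ab)) + /(_ (kedge cd)).
  rewrite !kedge_in_star !inE !eqxx /= ?orbT => /(_ isT) iab /(_ isT).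
  by case/orP: iab => /eqP->; rewrite ?(negbTE ac, negbTE ad, negbTE bc, negbTE bd).
case/existsP => a /existsP [b /existsP [c /andP [u /eqP ->]]].
move: u; rewrite /= !inE !negb_or => /andP [/andP [ab ac] /andP [bc _]].
apply/negP => /subsetP /[dup] /[dup] /(_ (kedge ab)) + /(_ (kedge ac)) + /(_ (kedge bc)).
rewrite !kedge_in_star !inE !eqxx /= ?orbT => /(_ isT) iab /(_ isT) iac /(_ isT) ibc.
by case/orP: iab => /eqP Ei; [move: ibc | move: iac];
  rewrite Ei ?(eq_sym b a, negbTE ab, negbTE ac, negbTE bc).
Qed.

Lemma star_face i s : s \subset star i -> s \in DeltaJKn n.
Proof.
move=> si; rewrite inE; apply/forall_inP => G /(JKn_gen_not_sub_star i).
by apply: contra => /subset_trans; apply.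
Qed.

Lemma face_no_disjoint_pair s e f i j (k l : 'I_n) : s \in DeltaJKn n -> e \in s -> f \in s ->
  uniq [:: i; j; k; l] -> val e = [set i; j] -> val f = [set k; l] -> False.
Proof.
move=> /[!inE] /forall_inP sD es fs u Ee Ef.
set G := [set x : Kedge n | (val x == [set i; j]) || (val x == [set k; l])].
have /sD/negP : G \in JKn_gens n.
  rewrite inE; apply/orP; left; apply/existsP; exists i; apply/existsP; exists j.
  by apply/existsP; exists k; apply/existsP; exists l; rewrite u eqxx.
apply; apply/subsetP => x; rewrite inE -Ee -Ef.
by case/orP => /eqP/val_inj->.
Qed.

Lemma face_no_triangle s e f g i j (k : 'I_n) : s \in DeltaJKn n -> e \in s -> f \in s -> g \in s ->
  uniq [:: i; j; k] -> val e = [set i; j] -> val f = [set i; k] -> val g = [set j; k] -> False.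
Proof.
move=> /[!inE] /forall_inP sD es fs gs u Ee Ef Eg.
set G := [set x : Kedge n |
  [|| val x == [set i; j], val x == [set i; k] | val x == [set j; k]]].
have /sD/negP : G \in JKn_gens n.
  rewrite inE; apply/orP; right; apply/existsP; exists i; apply/existsP; exists j.
  by apply/existsP; exists k; rewrite u eqxx.
apply; apply/subsetP => x; rewrite inE -Ee -Ef -Eg.
by case/or3P => /eqP/val_inj->.
Qed.

Lemma face_edge_meet s e f (x y : 'I_n) : s \in DeltaJKn n -> e \in s -> f \in s ->
  val e = [set x; y] -> x \notin val f -> y \in val f.
Proof.
move=> sD es fs Ee xf; apply/negPn/negP => yf.
have /eqP/cards2P [k [l [kl Ef]]] := card_Kedge_val f.
have xy : x != y by have := card_Kedge_val e; rewrite Ee cards2; case: (x != y).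
apply: (face_no_disjoint_pair sD es fs _ Ee Ef).
move: xf yf; rewrite Ef !inE !negb_or => /andP [xk xl] /andP [yk yl].
by rewrite /= !inE !negb_or xy xk xl yk yl kl.
Qed.

(* If some edge f = [bc] of s avoids a vertex a of e = [ab], then every edge
   avoiding b must meet both e and f, hence be [ac], closing a triangle. *)
Lemma face_sub_star s : (0 < n)%N -> s \in DeltaJKn n -> exists i, s \subset star i.
Proof.
move=> n0 sD; have [->|[e es]] := set_0Vmem s.
  by exists (Ordinal n0); rewrite sub0set.
have /eqP/cards2P [a [b [ab Ee]]] := card_Kedge_val e.
have [sa|/subsetPn [f fs]] := boolP (s \subset star a); first by exists a.
rewrite inE => af; have bf := face_edge_meet sD es fs Ee af.
have [c cb Ef] := Kedge_other bf.
have ca : c != a by apply: contraNneq af => <-; rewrite Ef !inE eqxx orbT.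
exists b; apply/subsetP => g gs; rewrite inE; apply/negPn/negP => bg.
have ag := face_edge_meet sD es gs (etrans Ee (setUC _ _)) bg.
have cg : c \in val g by apply: face_edge_meet sD fs gs Ef bg.
have [y ya Eg] := Kedge_other ag.
have yc : y = c by move: cg; rewrite Eg !inE (negbTE ca) => /eqP.
apply: (face_no_triangle sD es gs fs _ Ee) Ef; last by rewrite Eg yc.
by rewrite /= !inE negb_or ab eq_sym ca eq_sym cb.
Qed.

Lemma DeltaJKnP s : (0 < n)%N -> reflect (exists i, s \subset star i) (s \in DeltaJKn n).
Proof.
move=> n0; apply: (iffP idP); first exact: face_sub_star.
by case=> i; apply: star_face.
Qed.

Lemma star_subset i j : (3 <= n)%N -> (star i \subset star j) = (i == j).
Proof.
move=> n3; apply/idP/eqP => [sij|->]; last exact: subxx.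
apply/eqP/negP => /negP ij.
have : (0 < #|~: [set i; j]|)%N.
  have c2 : #|[set i; j]| = 2 by rewrite cards2 ij.
  by rewrite -(ltn_add2l 2) addn0 -[in (2 + _)%N]c2 cardsC card_ord.
case/card_gt0P => k; rewrite !inE negb_or eq_sym => /andP [ik kj].
have := subsetP sij (kedge ik); rewrite !kedge_in_star eqxx => /(_ isT).
by rewrite eq_sym (negbTE ij) eq_sym (negbTE kj).
Qed.

Lemma star_inj : (3 <= n)%N -> injective star.
Proof. by move=> n3 i j Eij; apply/eqP; rewrite -star_subset // Eij. Qed.

(* Junk value [i] when [i \notin val e]. *)
Definition other i e : 'I_n := odflt i [pick x in val e :\ i].

Lemma other_kedge i (k : 'I_n) (ik : i != k) : other i (kedge ik) = k.
Proof.
rewrite /other; case: pickP => [x|/(_ k)]; rewrite /= !inE.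
  by case/andP => /negbTE-> /eqP.
by rewrite eq_sym ik eqxx orbT.
Qed.

Lemma otherP i e : i \in val e -> other i e != i /\ val e = [set i; other i e].
Proof.
move=> ie; have [k ki Ee] := Kedge_other ie; rewrite eq_sym in ki.
have -> : e = kedge ki by apply: val_inj.
by rewrite other_kedge eq_sym ki.
Qed.

Lemma card_star i : #|star i| = n.-1.
Proof.
rewrite -[n in RHS]card_ord -(cardsC1 i).
have -> : [set~ i] = other i @: star i.
  apply/setP => k; apply/idP/imsetP => [|[e /[!inE] /otherP [oi _] -> //]].
  rewrite !inE eq_sym => ik; exists (kedge ik); first by rewrite kedge_in_star eqxx.
  by rewrite other_kedge.
apply/esym/card_in_imset => e f /[!inE] /otherP [_ Ee] /otherP [_ Ef] Eef.
by apply: val_inj; rewrite Ee Ef Eef.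
Qed.

Lemma facets_DeltaJKn : (3 <= n)%N -> facets (DeltaJKn n) = [set star i | i in 'I_n].
Proof.
move=> n3; have n0 : (0 < n)%N by apply: leq_trans n3.
apply/setP => F; rewrite inE; apply/andP/imsetP => [[/(DeltaJKnP _ n0) [i Fi] Fmax]|[i _ ->]].
  exists i => //; apply/eqP; rewrite eq_sym.
  by apply: (implyP (forall_inP Fmax _ (star_face (subxx _)))).
split; first exact: star_face (subxx _).
apply/forall_inP => G /(DeltaJKnP _ n0) [j Gj]; apply/implyP => iG.
have := subset_trans iG Gj; rewrite star_subset // => /eqP ij.
by rewrite eqEsubset iG ij Gj.
Qed.

Lemma cx_delta_DeltaJKn : (0 < n)%N -> cx_delta (DeltaJKn n) = n.-1.
Proof.
move=> n0; apply/eqP; rewrite eqn_leq; apply/andP; split.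
  apply/bigmax_leqP => s /(DeltaJKnP _ n0) [i si].
  by rewrite -(card_star i) subset_leq_card.
rewrite -(card_star (Ordinal n0)).
by apply: (leq_bigmax_cond (F := fun s => #|s|)); apply: star_face (subxx _).
Qed.

Lemma card_Kedge : #|{: Kedge n}| = 'C(n, 2).
Proof.
by rewrite card_sig -[n in RHS]card_ord -card_draws; apply: eq_card => E; rewrite !inE.
Qed.

Lemma small_face s : (0 < n)%N -> (#|s| <= 1)%N -> s \in DeltaJKn n.
Proof.
move=> n0 /card_le1_eqP s1; have [->|[e es]] := set_0Vmem s.
  exact: (@star_face (Ordinal n0)) (sub0set _).
have /eqP/cards2P [a [b [_ Ee]]] := card_Kedge_val e.
apply: (@star_face a); apply/subsetP => f fs.
by rewrite -(s1 f e fs es) inE Ee !inE eqxx.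
Qed.

Lemma fnum_DeltaJKn_small k : (0 < n)%N -> (k <= 1)%N ->
  fnum (DeltaJKn n) k = 'C('C(n, 2), k).
Proof.
move=> n0 k1; rewrite /fnum -card_Kedge -card_draws; apply: eq_card => s.
rewrite !inE; case: eqP => [sk|]; rewrite ?andbF ?andbT //.
by have := @small_face s n0; rewrite inE sk => ->.
Qed.

Lemma star_center_uniq s i j : (1 < #|s|)%N -> s \subset star i -> s \subset star j -> i = j.
Proof.
move=> /card_gt1P [e [f [es fs ef]]] si sj; apply/eqP/negP => /negP ij.
suff edge_ij g : g \in s -> val g = [set i; j].
  by move: ef; rewrite (val_inj (etrans (edge_ij e es) (esym (edge_ij f fs)))) eqxx.
move=> gs; have /otherP [_ Eg] : i \in val g by have := subsetP si g gs; rewrite inE.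
have : j \in val g by have := subsetP sj g gs; rewrite inE.
by rewrite Eg !inE eq_sym (negbTE ij) => /eqP <-.
Qed.

Lemma fnum_DeltaJKn_large k : (0 < n)%N -> (2 <= k)%N ->
  fnum (DeltaJKn n) k = (n * 'C(n.-1, k))%N.
Proof.
move=> n0 k2; rewrite /fnum -sum1_card.
transitivity (\sum_(s in [set s in DeltaJKn n | #|s| == k]) \sum_(i < n) (s \subset star i : nat))%N.
  apply: eq_bigr => s; rewrite inE => /andP [/(DeltaJKnP _ n0) [i si] /eqP sk].
  rewrite (bigD1 i) //= si big1 // => j ji.
  apply/eqP; rewrite eqb0; apply: contra ji => sj.
  by rewrite (star_center_uniq _ si sj) ?sk.
rewrite exchange_big /= -[n in (n * _)%N]card_ord -sum_nat_const.
apply: eq_bigr => i _.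
rewrite -(card_star i) -cards_draws -sum1_card big_mkcond [RHS]big_mkcond /=.
apply: eq_bigr => s _; rewrite !inE.
have [si|_] := boolP (s \subset star i); last by rewrite if_same.
by have := star_face si; rewrite inE => ->.
Qed.

Lemma star_sub_other_facets i : (3 <= n)%N ->
  star i \subset \bigcup_(G in [set star j | j in 'I_n] | G != star i) G.
Proof.
move=> n3; apply/subsetP => e /[!inE] /otherP [oi Ee]; apply/bigcupP.
exists (star (other i e)); first by rewrite imset_f // (inj_eq (star_inj n3)).
by rewrite inE Ee !inE eqxx orbT.
Qed.

End DeltaJKn.

Local Open Scope ring_scope.

Lemma face_poly_DeltaJKn n : (3 <= n)%N ->
  face_poly (DeltaJKn n) =
    'X^(n.-1)
    + n%:R * (\sum_(1 <= k < n) ('C(n.-1, k))%:R *: 'X^(n.-1 - k))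
    - ('C(n, 2))%:R *: 'X^(n - 2).
Proof.
move=> n3; have n0 : (0 < n)%N by apply: leq_trans n3.
have n1 : (1 < n)%N by apply: leq_trans n3.
have natZ (m c : nat) (p : {poly int}) : m%:R * (c%:R *: p) = (m * c)%N%:R *: p.
  by rewrite natrM -scalerA !scaler_nat mulr_natl.
have large_terms : \sum_(2 <= k < n) (fnum (DeltaJKn n) k)%:R *: 'X^(n.-1 - k) =
    n%:R * \sum_(2 <= k < n) ('C(n.-1, k))%:R *: 'X^(n.-1 - k) :> {poly int}.
  rewrite mulr_sumr; apply: eq_big_nat => k /andP [k2 _].
  by rewrite natZ fnum_DeltaJKn_large.
have twice : (n * 'C(n.-1, 1) = 'C(n, 2) + 'C(n, 2))%N by rewrite mul_bin_diag mul2n addnn.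
rewrite /face_poly cx_delta_DeltaJKn // prednK //.
rewrite -(big_mkord xpredT (fun k => (fnum (DeltaJKn n) k)%:R *: 'X^(n.-1 - k))).
rewrite big_ltn // fnum_DeltaJKn_small // bin0 subn0 scale1r.
rewrite big_ltn // [in RHS]big_ltn // fnum_DeltaJKn_small // bin1 large_terms.
rewrite mulrDr natZ twice natrD scalerDl subn1 subn2.
by rewrite addrA [in RHS]addrA [RHS]addrAC [in RHS]addrA addrK.
Qed.

Theorem lemma4p2 (n : nat) (hn : (3 <= n)%N) :
  let D := DeltaJKn n in
  [/\ #|facets D| = n,
      (forall F, F \in facets D -> #|F| = n.-1),
      (forall F, F \in facets D ->
         #|F :&: \bigcup_(G in facets D | G != F) G| = n.-1) &
      face_poly D =
        'X^(n.-1)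
        + n%:R * (\sum_(1 <= k < n) ('C(n.-1, k))%:R *: 'X^(n.-1 - k))
        - ('C(n, 2))%:R *: 'X^(n - 2)].
Proof.
move=> D; rewrite /D facets_DeltaJKn //; split.
- by rewrite card_imset ?card_ord //; apply: star_inj.
- by move=> _ /imsetP [i _ ->]; rewrite card_star.
- by move=> _ /imsetP [i _ ->]; rewrite (setIidPl (star_sub_other_facets i hn)) card_star.
- exact: face_poly_DeltaJKn.
Qed.
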